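(* Let $L$ be a link. For every $n \ge 2$, $\beta_2(L) \le \beta_n(L)$.
   Context: An $n$-crossing ($n\ge 2$) in a link projection is a point where $n$ strands meet, each bisecting the crossing, with the strands assigned distinct levels $1,\dots,n$ (level $1$ on top) recording their heights. An $m$-string $n$-crossing braid is a braid diagram on $m$ strings all of whose crossings are $n$-crossings; each such crossing involves strings in consecutive positions $j,\dots,j+n-1$ and reverses their order. A $2$-crossing braid is an ordinary braid. The $n$-crossing braid index $\beta_n(L)$ is the minimum number of strings of an $n$-crossing braid whose closure is isotopic to $L$, and $\beta_n(L)=\infty$ if no such braid exists. Thus $\beta_2(L)$ is the usual braid index. *)

From mathcomp Require Import all_boot.
From Stdlib Require Import Relation_Operators.
Set Implicit Arguments. Unset Strict Implicit. Unset Printing Implicit Defensive.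

(** A generator [(i, b)] of an ordinary braid on [m] strings is the crossing
   between the strings in positions [i] and [i+1] (0-indexed, [i.+1 < m]);
   [b = true] means the left string (position [i]) passes OVER the right one
   (sigma_i), [b = false] means it passes under (sigma_i^{-1}).
   A braid is a pair (number of strings, word). *)
Definition gen := (nat * bool)%type.
Definition braid := (nat * seq gen)%type.

Definition valid_braid (x : braid) : bool := all (fun g : gen => g.1.+1 < x.1) x.2.

(** One elementary move between braids whose closures are isotopic links:
    braid-group relations, conjugation, and (positive/negative) stabilisation
    (Markov moves). *)
Inductive markov_step : braid -> braid -> Prop :=
| MS_free m w1 w2 i b :
    valid_braid (m, w1 ++ w2) -> i.+1 < m ->
    markov_step (m, w1 ++ (i, b) :: (i, ~~ b) :: w2) (m, w1 ++ w2)
| MS_far m w1 w2 i j b c :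
    valid_braid (m, w1 ++ w2) -> i.+1 < j -> j.+1 < m ->
    markov_step (m, w1 ++ (i, b) :: (j, c) :: w2) (m, w1 ++ (j, c) :: (i, b) :: w2)
| MS_braid m w1 w2 i :
    valid_braid (m, w1 ++ w2) -> i.+2 < m ->
    markov_step (m, w1 ++ [:: (i, true); (i.+1, true); (i, true)] ++ w2)
                (m, w1 ++ [:: (i.+1, true); (i, true); (i.+1, true)] ++ w2)
| MS_conj m g w :
    valid_braid (m, g :: w) -> markov_step (m, g :: w) (m, rcons w g)
| MS_stab m w b :
    0 < m -> valid_braid (m, w) -> markov_step (m, w) (m.+1, rcons w (m.-1, b)).

(** Closures of [x] and [y] are isotopic links (Markov's theorem). *)
Definition closure_isotopic : braid -> braid -> Prop :=
  clos_refl_sym_trans braid markov_step.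

(** A link is represented by a braid whose closure it is (Alexander's
    theorem); two representatives denote the same link iff
    [closure_isotopic]. *)
Definition link := braid.

(** An n-crossing is [(j, lv)]: it involves the strings in positions
   [j, ..., j+n-1] and reverses their order; [nth 0 lv k] is the level
   (in 1..n, level 1 on top) of the string entering at position [j+k]. *)
Definition ncrossing := (nat * seq nat)%type.

Definition valid_ncrossing (n m : nat) (c : ncrossing) : bool :=
  (c.1 + n <= m) && perm_eq c.2 (iota 1 n).

(** Perturbation of an n-crossing into ordinary crossings: the positive
    half-twist word (sigma_j ... sigma_{j+n-2})(sigma_j ... sigma_{j+n-3})...
    sigma_j, where in block [k] the string entering at position [j+k]
    successively crosses the strings entering at [j+k+1+t]; the sign of each
    crossing is given by the levels (the string with smaller level is on top). *)
Definition resolve (n : nat) (c : ncrossing) : seq gen :=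
  let: (j, lv) := c in
  flatten [seq [seq (j + t, nth 0 lv k < nth 0 lv (k.+1 + t)) | t <- iota 0 (n.-1 - k)]
          | k <- iota 0 n.-1].

Definition has_ncrossing_braid (n : nat) (L : link) (m : nat) : Prop :=
  exists w : seq ncrossing,
    all (valid_ncrossing n m) w /\
    closure_isotopic (m, flatten (map (resolve n) w)) L.

(** [beta_le n L k] : the n-crossing braid index beta_n(L) is <= k
    (false for all k exactly when beta_n(L) = infinity). *)
Definition beta_le (n : nat) (L : link) (k : nat) : Prop :=
  exists m, m <= k /\ has_ncrossing_braid n L m.

From mathcomp Require Import all_boot zify.
Set Implicit Arguments. Unset Strict Implicit. Unset Printing Implicit Defensive.

(* Perturbing every n-crossing of an m-string n-crossing braid into its
   half-twist word of ordinary crossings gives an ordinary m-string braid with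
   the same closure, and an ordinary crossing is a 2-crossing whose levels are
   [1; 2] or [2; 1] according to its sign. *)

Definition ncrossing_of_gen (g : gen) : ncrossing :=
  (g.1, if g.2 then [:: 1; 2] else [:: 2; 1]).

Lemma resolve_ncrossing_of_gen (g : gen) : resolve 2 (ncrossing_of_gen g) = [:: g].
Proof. by case: g => i [] /=; rewrite addn0. Qed.

Lemma flatten_resolve_ncrossing_of_gen (s : seq gen) :
  flatten (map (resolve 2) (map ncrossing_of_gen s)) = s.
Proof.
elim: s => // g s IHs.
by rewrite !map_cons resolve_ncrossing_of_gen /= IHs.
Qed.

Lemma valid_ncrossing_of_gen (m : nat) (g : gen) :
  g.1.+1 < m -> valid_ncrossing 2 m (ncrossing_of_gen g).
Proof. by case: g => i [] /= lt_im; rewrite /valid_ncrossing /= addn2 lt_im. Qed.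

Lemma valid_braid_resolve (n m : nat) (c : ncrossing) :
  valid_ncrossing n m c -> valid_braid (m, resolve n c).
Proof.
case: c => j lv /andP [/= le_jn_m _].
apply/allP => _ /flattenP [_ /mapP [k k_in ->]] /mapP [t t_in ->] /=.
move: k_in t_in; rewrite !mem_iota !add0n => /andP [_ lt_kn] /andP [_ lt_tn].
lia.
Qed.

Lemma valid_braid_flatten_resolve (n m : nat) (w : seq ncrossing) :
  all (valid_ncrossing n m) w -> valid_braid (m, flatten (map (resolve n) w)).
Proof.
elim: w => //= c w IHw /andP [valid_c valid_w].
rewrite /valid_braid all_cat; apply/andP; split.
  exact: valid_braid_resolve valid_c.
exact: IHw.
Qed.

Lemma has_2crossing_braid_of_isotopic (x : braid) (L : link) :
  valid_braid x -> closure_isotopic x L -> has_ncrossing_braid 2 L x.1.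
Proof.
case: x => m s valid_s iso_sL.
exists (map ncrossing_of_gen s); rewrite flatten_resolve_ncrossing_of_gen.
split=> //; rewrite all_map.
by apply: sub_all valid_s => g; apply: valid_ncrossing_of_gen.
Qed.

(* No lower bound on [n] is needed: for [n < 2] the word [resolve n c] is empty. *)
Lemma has_2crossing_braid_of_ncrossing (n : nat) (L : link) (m : nat) :
  has_ncrossing_braid n L m -> has_ncrossing_braid 2 L m.
Proof.
move=> [w [valid_w iso_wL]].
exact: has_2crossing_braid_of_isotopic (valid_braid_flatten_resolve valid_w) iso_wL.
Qed.

Theorem theorem5p1 (L : link) (n : nat) (hn : 2 <= n) :
  forall k : nat, beta_le n L k -> beta_le 2 L k.
Proof.
move=> k [m [le_mk has_nL]].
by exists m; split=> //; apply: has_2crossing_braid_of_ncrossing has_nL.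
Qed.
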